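(* Consider the algorithm SR-DFF run with input $m$ on a stream consistent with a representation $\mathcal{G}$ of size $m$ with at most $k$ exceptions. If the rule $C[\hat x]$ is deleted, then at least one of the following holds: $\hat x$ is an exception, or $C[\hat x]$ is corrupted.
   Context: Setting. $\mathcal{X}$ is a domain, $\mathcal{Y}$ a finite label set, $\Phi$ a set of binary features on $\mathcal{X}$ closed under negation. A representation of size $m$ is a cover $\mathcal{G}=\{G_1,\dots,G_m\}$ of $\mathcal{X}$ by components with labels $\ell(G)$; each $x$ has a fixed component $G(x)\ni x$; $c^*(x)=\ell(G(x))$; for components $G_i,G_j$ with different labels there is $\phi(G_i,G_j)\in\Phi$ true on all of $G_i$ and false on all of $G_j$, with $\phi(G_j,G_i)=\neg\phi(G_i,G_j)$. Protocol: the learner first gets $x_0$ with label $y_0$; then each example $x_t$ arrives, the learner predicts a label with an explanation example previously seen with that label; on a mistake the teacher gives $y_t=c^*(x_t)$ and $\phi(G(x_t),G(\hat x_t))$, $\hat x_t$ the explanation. An exception is an example on which the feedback is inconsistent with the representation/protocol; a stream is consistent with $\mathcal{G}$ with at most $k$ exceptions if at most $k$ examples are exceptions. SR-DFF (input $m$): receives $(x_0,y_0)$; maintains a list $L$ of rules, each indexed by a representative example $x$, with a conjunction $C[x]$ of features and a label $\texttt{label}[x]$. On $x_t$: if some $C[\hat x]\in L$ is satisfied by $x_t$, predict $\texttt{label}[\hat x]$ with explanation $\hat x$; if incorrect, receive $y_t,\phi$, set $C[\hat x]:=C[\hat x]\wedge\neg\phi$, and delete the rule if $C[\hat x]$ has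 at least $m$ features. Otherwise predict $y_0$ with explanation $x_0$; if incorrect, receive $y_t,\phi$ and add a new rule with empty conjunction $C[x_t]$ and $\texttt{label}[x_t]=y_t$. A rule is corrupted if at least one of the features in its conjunction was added during a refinement step triggered by an example $x_t$ that was an exception. *)

From mathcomp Require Import all_boot.
Set Implicit Arguments. Unset Strict Implicit. Unset Printing Implicit Defensive.

(* X : domain, Y : finite label set, F : the feature set Phi,
   with [fev f x] the (boolean) value of feature f at x and [fneg f] the
   negation of f (Phi closed under negation: fev (fneg f) x = ~~ fev f x,
   assumed in the theorem).                                            *)

(* A representation of size m: components G_0..G_{m-1} (as predicates on
   X), their labels, the fixed component G(x) of every x (which contains x,
   so the G_i cover X), and separating features phi(G_i,G_j) for
   components with different labels.                                   *)
Record representation (X : Type) (Y : eqType) (F : Type)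
    (fev : F -> X -> bool) (fneg : F -> F) (m : nat) := Representation {
  comp_mem : 'I_m -> X -> bool;
  comp_lab : 'I_m -> Y;
  comp_of : X -> 'I_m;
  comp_sep : 'I_m -> 'I_m -> F;
  comp_ofP : forall x, comp_mem (comp_of x) x;
  comp_sep_true : forall i j, comp_lab i != comp_lab j ->
    forall x, comp_mem i x -> fev (comp_sep i j) x;
  comp_sep_false : forall i j, comp_lab i != comp_lab j ->
    forall x, comp_mem j x -> ~~ fev (comp_sep i j) x;
  comp_sep_neg : forall i j, comp_lab i != comp_lab j ->
    comp_sep j i = fneg (comp_sep i j)
}.

Section SRDFF.
Variables (X : Type) (Y : finType) (F : eqType).
Variables (fev : F -> X -> bool) (fneg : F -> F) (m : nat).

Definition cstar (G : @representation X Y F fev fneg m) (x : X) : Y :=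
  comp_lab G (comp_of G x).

(* A rule: (index t of its representative example x_t, label,
   conjunction).  Each conjunct is stored together with the time step of
   the example whose (mistake) feedback added it. *)
Definition rule := (nat * Y * seq (F * nat))%type.
Definition r_id (r : rule) : nat := r.1.1.
Definition r_lab (r : rule) : Y := r.1.2.
Definition r_conj (r : rule) : seq (F * nat) := r.2.

Definition satisfies (C : seq (F * nat)) (x : X) : bool :=
  all (fun p => fev p.1 x) C.

(* The algorithm allows any such choice; the theorem quantifies over all
   valid selectors. *)
Definition valid_selector (sel : nat -> seq rule -> X -> option rule) :=
  forall t L x, match sel t L x with
                | Some r => (r \in L) && satisfies (r_conj r) x
                | None => ~~ has (fun r => satisfies (r_conj r) x) L
                end.

Record event := Event {
  ev_expl : option nat;              (* explanation: None = x_0, Some j = x_j *)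
  ev_mistake : bool;
  ev_deleted : option (nat * seq (F * nat))
    (* Some (j, C): the rule with representative x_j was deleted, its
       conjunction (after the last refinement) being C *)
}.

(* Stream element at time t >= 1: (x_t, y_t, phi_t), where y_t is the label
   given by the teacher and phi_t the feature given on a mistake (ignored
   if there is no mistake). *)
Definition step (sel : nat -> seq rule -> X -> option rule) (y0 : Y)
    (t : nat) (L : seq rule) (a : X * Y * F) : seq rule * event :=
  let: (x, y, phi) := a in
  match sel t L x with
  | Some r =>
      if r_lab r == y then (L, Event (Some (r_id r)) false None)
      else
        let C' := rcons (r_conj r) (fneg phi, t) in
        if m <= size C' then
          ([seq r' <- L | r_id r' != r_id r],
           Event (Some (r_id r)) true (Some (r_id r, C')))
        else
          ([seq (if r_id r' == r_id r then (r_id r, r_lab r, C') else r')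
           | r' <- L], Event (Some (r_id r)) true None)
  | None =>
      if y0 == y then (L, Event None false None)
      else (rcons L (t, y, [::]), Event None true None)
  end.

Fixpoint run_from sel y0 (t : nat) (L : seq rule) (s : seq (X * Y * F))
    : seq event :=
  match s with
  | [::] => [::]
  | a :: s' => let: (L', e) := step sel y0 t L a in
               e :: run_from sel y0 t.+1 L' s'
  end.

(* events of the run of SR-DFF on (x_0,y_0) followed by the stream s;
   the i-th event corresponds to time i+1 *)
Definition run sel y0 (s : seq (X * Y * F)) : seq event :=
  run_from sel y0 1 [::] s.

Definition dummy_event : event := Event None false None.

Definition ex_at (x0 : X) (s : seq (X * Y * F)) (t : nat) : X :=
  nth x0 (x0 :: [seq a.1.1 | a <- s]) t.

Definition is_exception (G : @representation X Y F fev fneg m)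
    sel (x0 : X) (y0 : Y) (s : seq (X * Y * F)) (t : nat) : bool :=
  match t with
  | 0 => y0 != cstar G x0
  | i.+1 =>
      match nth (x0, y0, fneg (comp_sep G (comp_of G x0) (comp_of G x0))) s i with
      | (x, y, phi) =>
        let e := nth dummy_event (run sel y0 s) i in
        let xhat := match ev_expl e with
                    | None => x0 | Some j => ex_at x0 s j end in
        (y != cstar G x) ||
        (ev_mistake e && (phi != comp_sep G (comp_of G x) (comp_of G xhat)))
      end
  end.

Definition num_exceptions G sel x0 y0 s : nat :=
  count (is_exception G sel x0 y0 s) (iota 0 (size s).+1).

Definition corrupted G sel x0 y0 s (C : seq (F * nat)) : bool :=
  has (fun p => is_exception G sel x0 y0 s p.2) C.

End SRDFF.

From mathcomp Require Import all_boot.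

(* Suppose the explanation x_j of a deleted rule is not an exception and no
   conjunct of its conjunction C was added at an exception.  Then each
   conjunct is ~phi(G(x_t), G(x_j)) for a mistake at some x_t whose label
   differs from l(G(x_j)), and every later refining example satisfies it, so
   lies outside G(x_t).  Thus G(x_j) and the components of the |C| >= m
   refining examples are pairwise distinct: m + 1 components among m. *)

Set Implicit Arguments.
Unset Strict Implicit.
Unset Printing Implicit Defensive.

Section Separation.
Variables (X F : Type) (Y : eqType) (fev : F -> X -> bool) (fneg : F -> F).
Hypothesis fnegP : forall f x, fev (fneg f) x = ~~ fev f x.
Variables (m : nat) (G : representation Y fev fneg m).

Lemma size_separated_lt (c : 'I_m) (xs : seq X) :
    all (fun x => comp_lab G (comp_of G x) != comp_lab G c) xs ->
    pairwise (fun x x' => fev (fneg (comp_sep G (comp_of G x) c)) x') xs ->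
  size xs < m.
Proof.
move=> lab_xs sep_xs.
have c_notin : c \notin map (comp_of G) xs.
  rewrite -has_pred1 has_map -all_predC; apply: sub_all lab_xs => x /=.
  by apply: contra => /eqP ->.
have uniq_comps : uniq (map (comp_of G) xs).
  apply: (@pairwise_uniq _ (fun i i' => i != i')) => [i|]; first by rewrite eqxx.
  rewrite pairwise_map; apply: (sub_in_pairwise _ lab_xs sep_xs) => x x' lab_x _.
  apply: contraTneq => /= same_comp.
  by rewrite fnegP (comp_sep_true lab_x) // same_comp comp_ofP.
have /card_uniqP card_comps : uniq (c :: map (comp_of G) xs) by rewrite /= c_notin.
have := max_card (mem (c :: map (comp_of G) xs)).
by rewrite card_comps card_ord /= size_map.
Qed.

End Separation.

Section Run.
Variables (X : Type) (Y : finType) (F : eqType) (fev : F -> X -> bool).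
Variables (fneg : F -> F) (m : nat).
Variables (sel : nat -> seq (rule Y F) -> X -> option (rule Y F)) (y0 : Y).
Hypothesis selP : valid_selector fev sel.

Local Notation step := (step fneg m sel y0).
Local Notation run_from := (run_from fneg m sel y0).

Fixpoint rules_from (t : nat) (L : seq (rule Y F)) (s : seq (X * Y * F)) :=
  if s is a :: s' then rules_from t.+1 (step t L a).1 s' else L.

Lemma nth_run_from d t L s i : i < size s ->
  nth (dummy_event F) (run_from t L s) i =
  (step (t + i) (rules_from t L (take i s)) (nth d s i)).2.
Proof.
elim: s t L i => [|a s IHs] t L [|i] //= lt_i; rewrite ?addn0 -?addSnnS.
  by case: (step t L a).
by case: (step t L a) => L' e /=; apply: IHs.
Qed.

Lemma rules_from_take_succ d t L s i : i < size s ->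
  rules_from t L (take i.+1 s) =
  (step (t + i) (rules_from t L (take i s)) (nth d s i)).1.
Proof.
elim: s t L i => [|a s IHs] t L [|i] //= lt_i; first by rewrite addn0 take0.
by rewrite -addSnnS IHs.
Qed.

Variables (s : seq (X * Y * F)) (d : X * Y * F).

Definition rules n := rules_from 1 [::] (take n s).
Definition ev n := nth (dummy_event F) (run fneg m sel y0 s) n.
(* Stream position [n] is time [n.+1] of the protocol, time [0] being x_0. *)
Definition stream_ex n := (nth d s n).1.1.
Definition stream_lab n := (nth d s n).1.2.
Definition stream_feat n := (nth d s n).2.

Lemma ev_step n : n < size s -> ev n = (step n.+1 (rules n) (nth d s n)).2.
Proof. by move=> lt_n; rewrite /ev /run (nth_run_from d) // add1n. Qed.

Lemma rules_step n : n < size s -> rules n.+1 = (step n.+1 (rules n) (nth d s n)).1.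
Proof. by move=> lt_n; rewrite /rules (rules_from_take_succ d) // add1n. Qed.

Lemma stream_nth n : nth d s n = (stream_ex n, stream_lab n, stream_feat n).
Proof. by rewrite /stream_ex /stream_lab /stream_feat; case: (nth d s n) => [[]]. Qed.

Definition refined_by j l (e : F * nat) : bool :=
  let t := e.2.-1 in
  [&& 0 < e.2, ev_expl (ev t) == Some j, ev_mistake (ev t),
      l != stream_lab t & e.1 == fneg (stream_feat t)].

Definition refinement_history j l (C : seq (F * nat)) : bool :=
  all (refined_by j l) C && pairwise (fun e e' => fev e.1 (stream_ex e'.2.-1)) C.

Definition rule_inv (r : rule Y F) : bool :=
  [&& 0 < r_id r, r_lab r == stream_lab (r_id r).-1 &
      refinement_history (r_id r) (r_lab r) (r_conj r)].

Lemma refinement_history_rcons j l C e :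
  refinement_history j l (rcons C e) =
  [&& refined_by j l e, satisfies fev C (stream_ex e.2.-1)
    & refinement_history j l C].
Proof.
rewrite /refinement_history all_rcons pairwise_rcons -andbA.
by case: (refined_by j l e) => //=; rewrite andbCA.
Qed.

Lemma refine_history n r : n < size s -> rule_inv r ->
    sel n.+1 (rules n) (stream_ex n) = Some r -> r_lab r != stream_lab n ->
  refinement_history (r_id r) (r_lab r)
    (rcons (r_conj r) (fneg (stream_feat n), n.+1)).
Proof.
move=> lt_n /and3P[_ _ hist_r] sel_r lab_r.
have := selP n.+1 (rules n) (stream_ex n); rewrite sel_r => /andP[_ sat_r].
rewrite refinement_history_rcons sat_r hist_r /refined_by /= eqxx lab_r !andbT.
rewrite ev_step // stream_nth /step sel_r (negbTE lab_r).
by case: ifP; rewrite /= eqxx.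
Qed.

Lemma rules_inv n : n <= size s -> all rule_inv (rules n).
Proof.
elim: n => [|n IHn] le_n; first by rewrite /rules take0.
have /allP inv_L := IHn (ltnW le_n).
rewrite rules_step // stream_nth /step.
case sel_x: (sel n.+1 (rules n) (stream_ex n)) => [r|]; last first.
  case: eqP => _; first exact/allP.
  by rewrite all_rcons /rule_inv /= eqxx; apply/allP.
have := selP n.+1 (rules n) (stream_ex n); rewrite sel_x => /andP[r_in _].
case: eqP => [_|/eqP lab_r]; first exact/allP.
case: ifP => _; apply/allP.
  by move=> r'; rewrite mem_filter => /andP[_ /inv_L].
move=> _ /mapP[r' r'_in ->]; case: eqP => _; last exact: inv_L.
have /and3P[id_r lab_rE _] := inv_L r r_in.
by rewrite /rule_inv /= id_r lab_rE; apply: refine_history => //; apply: inv_L.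
Qed.

Lemma deleted_history i j C : i < size s -> ev_deleted (ev i) = Some (j, C) ->
  [&& 0 < j, m <= size C & refinement_history j (stream_lab j.-1) C].
Proof.
move=> lt_i; have /allP inv_L := @rules_inv i (ltnW lt_i).
rewrite ev_step // stream_nth /step.
case sel_x: (sel i.+1 (rules i) (stream_ex i)) => [r|]; last by case: eqP.
have := selP i.+1 (rules i) (stream_ex i); rewrite sel_x => /andP[r_in _].
case: eqP => //= /eqP lab_r; case: ifP => //= le_m [<- <-].
have /and3P[-> /eqP <- _] := inv_L r r_in.
by rewrite le_m refine_history // inv_L.
Qed.

End Run.

Section Exceptions.
Variables (X : Type) (Y : finType) (F : eqType) (fev : F -> X -> bool) (fneg : F -> F).
Hypothesis fnegP : forall f x, fev (fneg f) x = ~~ fev f x.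
Variables (m : nat) (G : representation Y fev fneg m).
Variable sel : nat -> seq (rule Y F) -> X -> option (rule Y F).
Variables (x0 : X) (y0 : Y) (s : seq (X * Y * F)).

(* [is_exception] reads the stream with this default. *)
Let d := (x0, y0, fneg (comp_sep G (comp_of G x0) (comp_of G x0))).
Local Notation is_exc := (is_exception G sel x0 y0 s).
Local Notation ev := (ev fneg m sel y0 s).
Local Notation stream_ex := (stream_ex s d).

Lemma ex_at_succ t : ex_at x0 s t.+1 = stream_ex t.
Proof.
rewrite /ex_at /= /stream_ex; case: (ltnP t (size s)) => [lt_t|le_t].
  by rewrite (nth_map d).
by rewrite !nth_default ?size_map.
Qed.

Lemma label_consistent t :
  ~~ is_exc t.+1 -> stream_lab s d t = cstar G (stream_ex t).
Proof. by rewrite /is_exception (stream_nth s d) negb_or => /andP[/negPn/eqP]. Qed.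

Lemma feature_consistent t j :
    ~~ is_exc t.+1 -> ev_expl (ev t) = Some j -> ev_mistake (ev t) ->
  stream_feat s d t = comp_sep G (comp_of G (stream_ex t)) (comp_of G (ex_at x0 s j)).
Proof.
rewrite /is_exception (stream_nth s d) negb_or => /andP[_].
by rewrite -/(ev t) => + expl_t mistake_t; rewrite expl_t mistake_t => /negPn/eqP.
Qed.

Lemma consistent_history_size_lt j C :
    0 < j -> ~~ is_exc j -> ~~ corrupted G sel x0 y0 s C ->
    refinement_history fev fneg m sel y0 s d j (stream_lab s d j.-1) C ->
  size C < m.
Proof.
case: j => // j _ nexc_j /hasPn ncor_C /andP[/allP refined_C sep_C].
set c := comp_of G (stream_ex j).
have entry_sep e : e \in C ->
    comp_lab G (comp_of G (stream_ex e.2.-1)) != comp_lab G c /\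
    e.1 = fneg (comp_sep G (comp_of G (stream_ex e.2.-1)) c).
  move=> e_in; have nexc_e := ncor_C e e_in.
  have /and5P[e_pos /eqP expl_e mistake_e lab_e /eqP ->] := refined_C e e_in.
  rewrite -(prednK e_pos) in nexc_e.
  rewrite (feature_consistent nexc_e expl_e mistake_e) ex_at_succ; split=> //.
  by move: lab_e; rewrite (label_consistent nexc_e) (label_consistent nexc_j) eq_sym.
rewrite -(size_map (fun e => stream_ex e.2.-1)).
apply: (size_separated_lt fnegP (G := G) (c := c)).
  by rewrite all_map; apply/allP => e /entry_sep[].
rewrite pairwise_map; apply: (sub_in_pairwise _ (allss C) sep_C).
by move=> e e' /entry_sep[_ ->].
Qed.

End Exceptions.

Theorem lemma3 (X : Type) (Y : finType) (F : eqType)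
    (fev : F -> X -> bool) (fneg : F -> F)
    (fnegP : forall f x, fev (fneg f) x = ~~ fev f x)
    (m : nat) (G : @representation X Y F fev fneg m) (k : nat)
    (x0 : X) (y0 : Y) (s : seq (X * Y * F))
    (sel : nat -> seq (rule Y F) -> X -> option (rule Y F))
    (selP : valid_selector fev sel)
    (hk : num_exceptions G sel x0 y0 s <= k)
    (i j : nat) (C : seq (F * nat)) :
  i < size s ->
  ev_deleted (nth (dummy_event F) (run fneg m sel y0 s) i) = Some (j, C) ->
  is_exception G sel x0 y0 s j || corrupted G sel x0 y0 s C.
Proof.
move=> lt_i deleted_i.
pose d := (x0, y0, fneg (comp_sep G (comp_of G x0) (comp_of G x0))).
have /and3P[j_pos le_m_C hist_C] := deleted_history selP d lt_i deleted_i.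
apply: contraT; rewrite negb_or => /andP[nexc_j ncor_C].
have := consistent_history_size_lt fnegP j_pos nexc_j ncor_C hist_C.
by rewrite ltnNge le_m_C.
Qed.
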